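(* Let $M$ be an $H_v$-module over an $H_v$-ring $R$, $T$ an idempotent interval $t$-norm and $S$ an idempotent interval $s$-norm. If $A=(\widetilde{M}_A,\widetilde{N}_A)$ is an interval valued intuitionistic $(S,T)$-fuzzy $H_v$-submodule of $M$, then $A/\varepsilon^*=(\widetilde{M}_{\varepsilon^*},\widetilde{N}_{\varepsilon^*})$ is an interval valued intuitionistic $(S,T)$-fuzzy submodule of the fundamental module $M/\varepsilon^*$ (over the fundamental ring $R/\gamma^*$).
   Context: For a set $H$, $P^*(H)$ denotes the non-empty subsets of $H$; a hyperoperation is a map $H\times H\to P^*(H)$, and for $A,B\subseteq H$, $A\cdot B=\bigcup_{a\in A,b\in B}a\cdot b$. An $H_v$-semigroup is $(H,\cdot)$ with $(x\cdot(y\cdot z))\cap((x\cdot y)\cdot z)\neq\emptyset$ for all $x,y,z$; an $H_v$-group is an $H_v$-semigroup with $a\cdot H=H\cdot a=H$ for all $a\in H$; it is weak commutative if $x\cdot y\cap y\cdot x\ne\emptyset$ for all $x,y$. An $H_v$-ring is $(R,+,\cdot)$ with $(R,+)$ an $H_v$-group, $(R,\cdot)$ an $H_v$-semigroup, and $(x\cdot(y+z))\cap(x\cdot y+x\cdot z)\ne\emptyset$, $((x+y)\cdot z)\cap(x\cdot z+y\cdot z)\ne\emptyset$ for all $x,y,z$. An $H_v$-module over an $H_v$-ring $R$ is a non-empty set $M$ with $(M,+)$ a weak commutative $H_v$-group and a map $\cdot:R\times M\to P^*(M)$ such that for all $a,b\in R$, $x,y\in M$: $(a\cdot(x+y))\cap(a\cdot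 x+a\cdot y)\ne\emptyset$, $((a+b)\cdot x)\cap(a\cdot x+b\cdot x)\ne\emptyset$, $((a\cdot b)\cdot x)\cap(a\cdot(b\cdot x))\ne\emptyset$. Fundamental relations: $\gamma^*$ is the smallest equivalence relation on $R$ such that $R/\gamma^*$ is a ring, and $\varepsilon^*$ is the smallest equivalence relation on $M$ such that $M/\varepsilon^*$ is a module over $R/\gamma^*$, with operations $\varepsilon^*(x)\oplus\varepsilon^*(y)=\varepsilon^*(c)$ for any $c\in\varepsilon^*(x)+\varepsilon^*(y)$ and $\gamma^*(r)\odot\varepsilon^*(x)=\varepsilon^*(d)$ for any $d\in\gamma^*(r)\cdot\varepsilon^*(x)$ (equivalently, $\varepsilon^*$ is the transitive closure of the relation $x\,\varepsilon\,y\iff\{x,y\}\subseteq u$ for some finite expression $u$ built from the hyperoperations of $R$ and $M$ and the external hyperoperation). $\omega_M$ denotes the zero element of $(M/\varepsilon^*,\oplus)$ (the core of $M$). $D[0,1]$ is the set of intervals $[a^-,a^+]$ with $0\le a^-\le a^+\le 1$, ordered componentwise; infima and suprema of families are taken componentwise. A map $\delta:[0,1]^2\to[0,1]$ that is commutative, associative, idempotent and monotone is an idempotent $t$-norm if $\delta(x,1)=x$ for all $x$, and an idempotent $s$-norm if $\delta(1,1)=1$ and $\delta(x,0)=x$ for all $x$. An idempotent interval $t$-norm (resp. $s$-norm) is a map $D[0,1]^2\to D[0,1]$, $([a_1^-,a_1^+],[a_2^-,a_2^+])\mapsto[\delta(a_1^-,a_2^-),\delta(a_1^+,a_2^+)]$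 with $\delta$ an idempotent $t$-norm (resp. $s$-norm). An interval valued intuitionistic fuzzy set on $X$ is a pair $A=(\widetilde{M}_A,\widetilde{N}_A)$ of maps $X\to D[0,1]$ with $\sup\widetilde{M}_A(x)+\sup\widetilde{N}_A(x)\le1$ for all $x$. $A=(\widetilde{M}_A,\widetilde{N}_A)$ on $M$ is an interval valued intuitionistic $(S,T)$-fuzzy $H_v$-submodule if: (1) $T(\widetilde{M}_A(x),\widetilde{M}_A(y))\le\inf_{\alpha\in x+y}\widetilde{M}_A(\alpha)$ and $S(\widetilde{N}_A(x),\widetilde{N}_A(y))\ge\sup_{\alpha\in x+y}\widetilde{N}_A(\alpha)$ for all $x,y$; (2) for all $x,a\in M$ there is $y$ with $x\in a+y$, $T(\widetilde{M}_A(x),\widetilde{M}_A(a))\le\widetilde{M}_A(y)$, $S(\widetilde{N}_A(x),\widetilde{N}_A(a))\ge\widetilde{N}_A(y)$; (3) for all $x,a\in M$ there is $z$ with $x\in z+a$, $T(\widetilde{M}_A(x),\widetilde{M}_A(a))\le\widetilde{M}_A(z)$, $S(\widetilde{N}_A(x),\widetilde{N}_A(a))\ge\widetilde{N}_A(z)$; (4) $\widetilde{M}_A(x)\le\inf_{\alpha\in r\cdot x}\widetilde{M}_A(\alpha)$ and $\widetilde{N}_A(x)\ge\sup_{\alpha\in r\cdot x}\widetilde{N}_A(\alpha)$ for all $x\in M$, $r\in R$. $A/\varepsilon^*=(\widetilde{M}_{\varepsilon^*},\widetilde{N}_{\varepsilon^*})$ with $\widetilde{M}_{\varepsilon^*},\widetilde{N}_{\varepsilon^*}:M/\varepsilon^*\to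 D[0,1]$ defined by $\widetilde{M}_{\varepsilon^*}(\varepsilon^*(x))=\sup_{a\in\varepsilon^*(x)}\widetilde{M}_A(a)$ and $\widetilde{N}_{\varepsilon^*}(\varepsilon^*(x))=\inf_{a\in\varepsilon^*(x)}\widetilde{N}_A(a)$ if $\varepsilon^*(x)\ne\omega_M$, and $\widetilde{M}_{\varepsilon^*}(\omega_M)=[1,1]$, $\widetilde{N}_{\varepsilon^*}(\omega_M)=[0,0]$. For an ordinary module $M'$ over a ring $R'$, an interval valued intuitionistic fuzzy set $A'=(\widetilde{M}_{A'},\widetilde{N}_{A'})$ on $M'$ is an interval valued intuitionistic $(S,T)$-fuzzy submodule if: (i) $\widetilde{M}_{A'}(0)=[1,1]$ and $\widetilde{N}_{A'}(0)=[0,0]$; (ii) $T(\widetilde{M}_{A'}(x),\widetilde{M}_{A'}(y))\le\widetilde{M}_{A'}(x-y)$ and $S(\widetilde{N}_{A'}(x),\widetilde{N}_{A'}(y))\ge\widetilde{N}_{A'}(x-y)$ for all $x,y\in M'$; (iii) $\widetilde{M}_{A'}(x)\le\widetilde{M}_{A'}(r x)$ and $\widetilde{N}_{A'}(x)\ge\widetilde{N}_{A'}(r x)$ for all $x\in M'$, $r\in R'$. *)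

From HB Require Import structures.
From mathcomp Require Import all_boot all_order all_algebra.
From mathcomp Require Import boolp classical_sets reals.
From Stdlib Require Import Relations.
Set Implicit Arguments. Unset Strict Implicit. Unset Printing Implicit Defensive.
Import Order.TTheory GRing.Theory Num.Theory.
Local Open Scope classical_set_scope.
Local Open Scope ring_scope.

Definition hlift (A B C : Type) (op : A -> B -> set C) (X : set A) (Y : set B)
  : set C := [set c | exists a b, X a /\ Y b /\ op a b c].

Definition hv_semigroup (H : Type) (op : H -> H -> set H) : Prop :=
  (forall x y, op x y !=set0) /\
  (forall x y z,
     (hlift op [set x] (op y z) `&` hlift op (op x y) [set z]) !=set0).

Definition hv_group (H : Type) (op : H -> H -> set H) : Prop :=
  hv_semigroup op /\
  (forall a, hlift op [set a] setT = setT /\ hlift op setT [set a] = setT).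

Definition weak_commutative (H : Type) (op : H -> H -> set H) : Prop :=
  forall x y, (op x y `&` op y x) !=set0.

Definition hv_ring (R : Type) (radd rmul : R -> R -> set R) : Prop :=
  [/\ hv_group radd, hv_semigroup rmul,
      (forall x y z,
         (hlift rmul [set x] (radd y z) `&` hlift radd (rmul x y) (rmul x z))
           !=set0) &
      (forall x y z,
         (hlift rmul (radd x y) [set z] `&` hlift radd (rmul x z) (rmul y z))
           !=set0)].

Definition hv_module (R M : Type) (radd rmul : R -> R -> set R)
  (madd : M -> M -> set M) (smul : R -> M -> set M) : Prop :=
  [/\ inhabited M, hv_group madd, weak_commutative madd,
      (forall a x, smul a x !=set0) &
      [/\ (forall a x y,
             (hlift smul [set a] (madd x y) `&` hlift madd (smul a x) (smul a y))
               !=set0),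
          (forall a b x,
             (hlift smul (radd a b) [set x] `&` hlift madd (smul a x) (smul b x))
               !=set0) &
          (forall a b x,
             (hlift smul (rmul a b) [set x] `&` hlift smul [set a] (smul b x))
               !=set0)]].

Inductive rterm (R : Type) : Type :=
| RLeaf of R
| RAdd of rterm R & rterm R
| RMul of rterm R & rterm R.

Inductive mterm (R M : Type) : Type :=
| MLeaf of M
| MAdd of mterm R M & mterm R M
| MSmul of rterm R & mterm R M.

Arguments RLeaf {R}. Arguments RAdd {R}. Arguments RMul {R}.
Arguments MLeaf {R M}. Arguments MAdd {R M}. Arguments MSmul {R M}.

Fixpoint rsem (R : Type) (radd rmul : R -> R -> set R) (u : rterm R) : set R :=
  match u with
  | RLeaf r => [set r]
  | RAdd u v => hlift radd (rsem radd rmul u) (rsem radd rmul v)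
  | RMul u v => hlift rmul (rsem radd rmul u) (rsem radd rmul v)
  end.

Fixpoint msem (R M : Type) (radd rmul : R -> R -> set R)
  (madd : M -> M -> set M) (smul : R -> M -> set M) (u : mterm R M) : set M :=
  match u with
  | MLeaf m => [set m]
  | MAdd u v => hlift madd (msem radd rmul madd smul u) (msem radd rmul madd smul v)
  | MSmul r v => hlift smul (rsem radd rmul r) (msem radd rmul madd smul v)
  end.

Definition gamma_rel (R : Type) (radd rmul : R -> R -> set R) (x y : R) : Prop :=
  exists u, rsem radd rmul u x /\ rsem radd rmul u y.

Definition gammaS (R : Type) (radd rmul : R -> R -> set R) : relation R :=
  clos_trans R (gamma_rel radd rmul).

Definition eps_rel (R M : Type) (radd rmul : R -> R -> set R)
  (madd : M -> M -> set M) (smul : R -> M -> set M) (x y : M) : Prop :=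
  exists u, msem radd rmul madd smul u x /\ msem radd rmul madd smul u y.

Definition epsS (R M : Type) (radd rmul : R -> R -> set R)
  (madd : M -> M -> set M) (smul : R -> M -> set M) : relation M :=
  clos_trans M (eps_rel radd rmul madd smul).

(* Intervals D[0,1], represented as pairs (a^-, a^+).                  *)

Section Intervals.
Variable K : realType.

Definition in01 (x : K) : Prop := 0 <= x /\ x <= 1.

Definition inD01 (a : K * K) : Prop := [/\ 0 <= a.1, a.1 <= a.2 & a.2 <= 1].

Definition ile (a b : K * K) : Prop := a.1 <= b.1 /\ a.2 <= b.2.

Definition isup (I : Type) (F : I -> K * K) (X : set I) : K * K :=
  (sup [set (F i).1 | i in X], sup [set (F i).2 | i in X]).
Definition iinf (I : Type) (F : I -> K * K) (X : set I) : K * K :=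
  (inf [set (F i).1 | i in X], inf [set (F i).2 | i in X]).

Definition norm_axioms (d : K -> K -> K) : Prop :=
  [/\ (forall x y, in01 x -> in01 y -> in01 (d x y)),
      (forall x y, in01 x -> in01 y -> d x y = d y x),
      (forall x y z, in01 x -> in01 y -> in01 z -> d x (d y z) = d (d x y) z),
      (forall x, in01 x -> d x x = x) &
      (forall x y z, in01 x -> in01 y -> in01 z -> y <= z -> d x y <= d x z)].

Definition idem_tnorm (d : K -> K -> K) : Prop :=
  norm_axioms d /\ (forall x, in01 x -> d x 1 = x).

Definition idem_snorm (d : K -> K -> K) : Prop :=
  [/\ norm_axioms d, d 1 1 = 1 & (forall x, in01 x -> d x 0 = x)].

Definition inorm (d : K -> K -> K) (a b : K * K) : K * K :=
  (d a.1 b.1, d a.2 b.2).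

Definition ivifs (X : Type) (MA NA : X -> K * K) : Prop :=
  forall x, [/\ inD01 (MA x), inD01 (NA x) & (MA x).2 + (NA x).2 <= 1].

End Intervals.

Definition ivif_ST_hv_submodule (K : realType) (R M : Type)
  (madd : M -> M -> set M) (smul : R -> M -> set M)
  (T S : K * K -> K * K -> K * K) (MA NA : M -> K * K) : Prop :=
  [/\ (forall x y, ile (T (MA x) (MA y)) (iinf MA (madd x y)) /\
                   ile (isup NA (madd x y)) (S (NA x) (NA y))),
      (forall x a, exists y, [/\ madd a y x,
                                 ile (T (MA x) (MA a)) (MA y) &
                                 ile (NA y) (S (NA x) (NA a))]),
      (forall x a, exists z, [/\ madd z a x,
                                 ile (T (MA x) (MA a)) (MA z) &
                                 ile (NA z) (S (NA x) (NA a))]) &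
      (forall x r, ile (MA x) (iinf MA (smul r x)) /\
                   ile (isup NA (smul r x)) (NA x))].

(* The fundamental module M/eps^* and the quotient A/eps^*, described on
   representatives: a class of M/eps^* is eps^*(x) for some x : M.    *)
Section Quotient.
Variables (R M : Type) (radd rmul : R -> R -> set R)
  (madd : M -> M -> set M) (smul : R -> M -> set M).

Local Notation eS := (epsS radd rmul madd smul).

Definition eclass (x : M) : set M := [set a | eS x a].

(* eps^*(u) (+) eps^*(v) = eps^*(w): some c in eps^*(u) + eps^*(v) lies in eps^*(w) *)
Definition qadd_rel (u v w : M) : Prop :=
  exists u' v' c, [/\ eS u u', eS v v', madd u' v' c & eS w c].

(* eps^*(x) = omega_M, the zero of (M/eps^*, (+)): for every class
   eps^*(y), every c in eps^*(x) + eps^*(y) or eps^*(y) + eps^*(x)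
   lies in eps^*(y). *)
Definition in_core (x : M) : Prop :=
  forall x' y y' c, eS x x' -> eS y y' -> (madd x' y' c \/ madd y' x' c) -> eS y c.

Variable K : realType.

Definition Meps (MA : M -> K * K) (x : M) : K * K :=
  if pselect (in_core x) then (1, 1) else isup MA (eclass x).
Definition Neps (NA : M -> K * K) (x : M) : K * K :=
  if pselect (in_core x) then (0, 0) else iinf NA (eclass x).

(* Subtraction: eps^*(d) is
   eps^*(x) - eps^*(y) iff eps^*(y) (+) eps^*(d) = eps^*(x).
   Scalar action: gamma^*(r) (.) eps^*(x) = eps^*(d) for d in
   gamma^*(r) . eps^*(x). *)
Definition quotient_ivif_ST_submodule (T S : K * K -> K * K -> K * K)
  (MA NA : M -> K * K) : Prop :=
  [/\ ivifs (Meps MA) (Neps NA),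
      (forall o, in_core o -> Meps MA o = (1, 1) /\ Neps NA o = (0, 0)),
      (forall x y d, qadd_rel y d x ->
          ile (T (Meps MA x) (Meps MA y)) (Meps MA d) /\
          ile (Neps NA d) (S (Neps NA x) (Neps NA y))) &
      (forall r r' x x' d, gammaS radd rmul r r' -> eS x x' -> smul r' x' d ->
          ile (Meps MA x) (Meps MA d) /\ ile (Neps NA d) (Neps NA x))].

End Quotient.

From mathcomp Require Import all_boot all_order all_algebra.
From mathcomp Require Import boolp classical_sets reals.
From Stdlib Require Import Relations.
Set Implicit Arguments. Unset Strict Implicit. Unset Printing Implicit Defensive.
Import Order.TTheory GRing.Theory Num.Theory.
Local Open Scope classical_set_scope.
Local Open Scope ring_scope.

(* On [0,1] an idempotent t-norm is [min] and an idempotent s-norm is [max],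
   so everything reduces to inequalities between componentwise suprema and
   infima over eps^*-classes.  Two properties of eps^* carry the argument: it
   is a congruence for the addition and the scalar action, and its classes
   form a group under (+), since reproducibility and associativity modulo
   eps^* give a neutral class (the core omega_M) and cancellation.
   Cancellation moves the witness y of condition (2) (x in a + y) into the
   class eps^*(x) - eps^*(a), and condition (4) passes directly through the
   scalar action.  An infimum is the negated supremum of the negated function,
   so [qsup] (the supremum over a class, with a fixed value [top] on the core)
   serves for both the membership and the non-membership function. *)

Section SupImage.
Variable K : realType.

Lemma sup_image_le (I : Type) (f : I -> K) (X : set I) m :
  X !=set0 -> (forall i, X i -> f i <= m) -> sup [set f i | i in X] <= m.
Proof.
move=> [i Xi] fm; apply: ge_sup; first by exists (f i), i.
by move=> _ [j Xj <-]; exact: fm.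
Qed.

Lemma le_sup_image (I : Type) (f : I -> K) (X : set I) m i :
  (forall j, X j -> f j <= m) -> X i -> f i <= sup [set f j | j in X].
Proof.
move=> fm Xi; apply: ub_le_sup; last by exists i.
by exists m => _ [j Xj <-]; exact: fm.
Qed.

Lemma min_sup_image_le (I : Type) (f g : I -> K) (X Y : set I) m :
  X !=set0 -> Y !=set0 ->
  (forall i j, X i -> Y j -> Num.min (f i) (g j) <= m) ->
  Num.min (sup [set f i | i in X]) (sup [set g j | j in Y]) <= m.
Proof.
move=> [i Xi] [j Yj] fgm; rewrite leNgt lt_min; apply/negP => /andP[fX gY].
have [_ [a Xa <-] fa] := sup_gt (ex_intro _ (f i) (ex_intro2 _ _ i Xi erefl)) fX.
have [_ [b Yb <-] gb] := sup_gt (ex_intro _ (g j) (ex_intro2 _ _ j Yj erefl)) gY.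
by move: (fgm _ _ Xa Yb); rewrite leNgt lt_min fa gb.
Qed.

Lemma inf_image (I : Type) (f : I -> K) (X : set I) :
  inf [set f i | i in X] = - sup [set - f i | i in X].
Proof. by rewrite /inf image_comp. Qed.

End SupImage.

Section IdempotentNorms.
Variable K : realType.

Lemma idem_tnorm_min (d : K -> K -> K) x y :
  idem_tnorm d -> in01 x -> in01 y -> d x y = Num.min x y.
Proof.
move=> [[_ dC _ dI dM] d1].
wlog xy : x y / x <= y.
  move=> W hx hy; case/orP: (le_total x y) => xy; first exact: W.
  by rewrite dC // W // minC.
move=> [x0 x1] [y0 y1]; rewrite (min_idPl xy); apply/eqP; rewrite eq_le.
apply/andP; split; first by rewrite -{2}(d1 x) //; apply: dM => //; split.
by rewrite -{1}(dI x) //; apply: dM.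
Qed.

Lemma idem_snorm_max (d : K -> K -> K) x y :
  idem_snorm d -> in01 x -> in01 y -> d x y = Num.max x y.
Proof.
move=> [[_ dC _ dI dM] _ d0].
wlog xy : x y / x <= y.
  move=> W hx hy; case/orP: (le_total x y) => xy; first exact: W.
  by rewrite dC // W // maxC.
move=> [x0 x1] [y0 y1]; rewrite (max_idPr xy); apply/eqP; rewrite eq_le.
apply/andP; split; first by rewrite dC // -{2}(dI y) //; apply: dM.
by rewrite dC // -{1}(d0 y) //; apply: dM => //; split.
Qed.

Lemma inD01_in01 (a : K * K) : inD01 a -> in01 a.1 /\ in01 a.2.
Proof. by move=> [a0 a12 a1]; split; split => //; apply: le_trans; eauto. Qed.

Lemma inorm_idem_tnorm (d : K -> K -> K) a b :
  idem_tnorm d -> inD01 a -> inD01 b -> inorm d a b = inorm Num.min a b.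
Proof.
move=> hd /inD01_in01[a1 a2] /inD01_in01[b1 b2].
by rewrite /inorm !(idem_tnorm_min hd).
Qed.

Lemma inorm_idem_snorm (d : K -> K -> K) a b :
  idem_snorm d -> inD01 a -> inD01 b -> inorm d a b = inorm Num.max a b.
Proof.
move=> hd /inD01_in01[a1 a2] /inD01_in01[b1 b2].
by rewrite /inorm !(idem_snorm_max hd).
Qed.

Lemma ile_iinf (I : Type) (F : I -> K * K) (X : set I) a i :
  (forall j, inD01 (F j)) -> ile a (iinf F X) -> X i -> ile a (F i).
Proof.
move=> F01 [a1 a2] Xi; split.
- apply: le_trans a1 _; rewrite /iinf /= inf_image lerNl.
  by apply: (le_sup_image (m := 0)) Xi => j _; rewrite oppr_le0; case: (F01 j).
- apply: le_trans a2 _; rewrite /iinf /= inf_image lerNl.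
  apply: (le_sup_image (m := 0)) Xi => j _; rewrite oppr_le0.
  by case: (F01 j) => F0 F12 _; exact: le_trans F12.
Qed.

Lemma isup_ile (I : Type) (F : I -> K * K) (X : set I) b i :
  (forall j, inD01 (F j)) -> ile (isup F X) b -> X i -> ile (F i) b.
Proof.
move=> F01 [b1 b2] Xi; split.
- apply: le_trans b1; apply: (le_sup_image (m := 1)) Xi => j _.
  by have [[_ ?] _] := inD01_in01 (F01 j).
- apply: le_trans b2; apply: (le_sup_image (m := 1)) Xi => j _.
  by case: (F01 j).
Qed.

End IdempotentNorms.

Section SupOverClasses.
Variables (K : realType) (M : Type) (C : M -> Prop) (E : M -> M -> Prop).
Hypothesis E_refl : forall x, E x x.

Definition qsup (top : K) (f : M -> K) (x : M) : K :=
  if pselect (C x) then top else sup [set f a | a in E x].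

Section OneFunction.
Variables (top : K) (f : M -> K).
Hypothesis f_le_top : forall a, f a <= top.

Lemma qsup_core x : C x -> qsup top f x = top.
Proof. by rewrite /qsup; case: pselect. Qed.

Lemma qsupE x : ~ C x -> qsup top f x = sup [set f a | a in E x].
Proof. by rewrite /qsup; case: pselect. Qed.

Lemma le_qsup x a : E x a -> f a <= qsup top f x.
Proof.
move=> xa; rewrite /qsup; case: pselect => Cx; first exact: f_le_top.
by apply: le_sup_image xa => j _; exact: f_le_top.
Qed.

Lemma qsup_le_top x : qsup top f x <= top.
Proof.
rewrite /qsup; case: pselect => // nCx.
by apply: sup_image_le => [|a _]; [exists x | exact: f_le_top].
Qed.

Lemma qsup_le x m : ~ C x -> (forall a, E x a -> f a <= m) -> qsup top f x <= m.
Proof. by move=> nCx fm; rewrite qsupE //; apply: sup_image_le => //; exists x. Qed.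

Lemma qsup_le_dominated x d :
  (C x -> C d) -> (forall a, E x a -> exists2 z, E d z & f a <= f z) ->
  qsup top f x <= qsup top f d.
Proof.
move=> Cxd dom; have [Cx|nCx] := pselect (C x).
  by rewrite (qsup_core Cx) (qsup_core (Cxd Cx)).
apply: qsup_le => // a /dom[z dz fz].
exact: le_trans fz (le_qsup dz).
Qed.

Lemma min_qsup_le_dominated x y d :
  (forall u v, C u -> C v -> E u v) -> (C x -> C y -> C d) ->
  (forall a, exists2 o, C o & f a <= f o) ->
  (forall a b, E x a -> E y b -> exists2 z, E d z & Num.min (f a) (f b) <= f z) ->
  Num.min (qsup top f x) (qsup top f y) <= qsup top f d.
Proof.
move=> E_core Cd to_core dom.
have [Cx|nCx] := pselect (C x); have [Cy|nCy] := pselect (C y).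
- by rewrite (qsup_core Cx) (qsup_core Cy) (qsup_core (Cd Cx Cy)) ge_min lexx.
- rewrite (qsup_core Cx) (min_idPr (qsup_le_top y)).
  apply: qsup_le => // b yb; have [o Co fbo] := to_core b.
  have [z dz fz] := dom o b (E_core _ _ Cx Co) yb.
  by apply: le_trans (le_qsup dz); rewrite -(min_idPr fbo).
- rewrite (qsup_core Cy) (min_idPl (qsup_le_top x)).
  apply: qsup_le => // a xa; have [o Co fao] := to_core a.
  have [z dz fz] := dom a o xa (E_core _ _ Cy Co).
  by apply: le_trans (le_qsup dz); rewrite -(min_idPl fao).
- rewrite (qsupE nCx) (qsupE nCy).
  apply: min_sup_image_le => [|| a b xa yb]; [by exists x | by exists y |].
  have [z dz fz] := dom a b xa yb.
  exact: le_trans fz (le_qsup dz).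
Qed.

End OneFunction.

Lemma qsup_le_shift (top top' c : K) (f g : M -> K) x :
  (forall a, g a <= top') -> top <= c + top' -> (forall a, f a <= c + g a) ->
  qsup top f x <= c + qsup top' g x.
Proof.
move=> g_le_top' tops fg; have [Cx|nCx] := pselect (C x).
  by rewrite !qsup_core.
apply: qsup_le => // a xa; apply: le_trans (fg a) _.
by rewrite lerD2l; exact: le_qsup.
Qed.

Lemma qsup_le_fun (top : K) (f g : M -> K) x :
  (forall a, g a <= top) -> (forall a, f a <= g a) -> qsup top f x <= qsup top g x.
Proof.
move=> g_le_top fg; rewrite -[X in _ <= X]add0r.
by apply: qsup_le_shift => // [|a]; rewrite add0r.
Qed.

End SupOverClasses.

Section FundamentalRelation.
Variables (R M : Type) (radd rmul : R -> R -> set R)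
  (madd : M -> M -> set M) (smul : R -> M -> set M).

Local Notation eS := (epsS radd rmul madd smul).
Local Notation eR := (eps_rel radd rmul madd smul).
Local Notation in_core := (in_core radd rmul madd smul).

Lemma eps_rel_refl x : eR x x. Proof. by exists (MLeaf x). Qed.

Lemma epsS_refl x : eS x x. Proof. exact: t_step (eps_rel_refl x). Qed.

Lemma epsS_sym x y : eS x y -> eS y x.
Proof.
elim=> [a b [u [ua ub]]|a b c _ ba _ cb]; first by apply: t_step; exists u.
exact: t_trans cb ba.
Qed.

Lemma epsS_trans x y z : eS x y -> eS y z -> eS x z. Proof. exact: t_trans. Qed.

Lemma in_core_epsS u v : in_core u -> eS u v -> in_core v.
Proof. by move=> Cu uv x' y y' c vx'; apply: Cu; exact: epsS_trans uv vx'. Qed.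

Lemma in_core_madd_l u b c : in_core u -> madd u b c -> eS b c.
Proof. by move=> Cu h; apply: Cu (epsS_refl u) (epsS_refl b) (or_introl h). Qed.

Lemma in_core_madd_r u b c : in_core u -> madd b u c -> eS b c.
Proof. by move=> Cu h; apply: Cu (epsS_refl u) (epsS_refl b) (or_intror h). Qed.

Hypothesis hM : hv_module radd rmul madd smul.

Lemma madd_nonempty x y : madd x y !=set0.
Proof. by case: hM => _ [[h _] _] _ _ _; apply: h. Qed.

Lemma smul_nonempty r x : smul r x !=set0.
Proof. by case: hM => _ _ _ h _; apply: h. Qed.

Lemma exists_madd_r a b : exists z, madd a z b.
Proof.
have : hlift madd [set a] setT b by case: hM => _ [_ /(_ a)[->]].
by move=> [_ [z [/= -> [_ h]]]]; exists z.
Qed.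

Lemma exists_madd_l a b : exists z, madd z a b.
Proof.
have : hlift madd setT [set a] b by case: hM => _ [_ /(_ a)[_ ->]].
by move=> [z [_ [_ [/= -> h]]]]; exists z.
Qed.

Lemma epsS_madd_eps_rel a a' b b' c c' :
  eS a a' -> eR b b' -> madd a b c -> madd a' b' c' -> eS c c'.
Proof.
move=> aa'; elim: aa' b b' c c' => [x y [u [ux uy]]|x y z _ IHxy _ IHyz] b b' c c'.
  move=> [v [vb vb']] hc hc'; apply: t_step.
  by exists (MAdd u v); split; [exists x, b | exists y, b'].
move=> bb' hc hc'; have [c1 hc1] := madd_nonempty y b'.
exact: epsS_trans (IHxy _ _ _ _ bb' hc hc1) (IHyz _ _ _ _ (eps_rel_refl b') hc1 hc').
Qed.

Lemma epsS_madd a a' b b' c c' :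
  eS a a' -> eS b b' -> madd a b c -> madd a' b' c' -> eS c c'.
Proof.
move=> aa' bb'; elim: bb' a a' c c' aa' => [x y h|x y z _ IHxy _ IHyz] a a' c c' aa' hc hc'.
  exact: epsS_madd_eps_rel aa' h hc hc'.
have [c1 hc1] := madd_nonempty a' y.
exact: epsS_trans (IHxy _ _ _ _ aa' hc hc1) (IHyz _ _ _ _ (epsS_refl a') hc1 hc').
Qed.

Lemma epsS_smul r a a' c c' : eS a a' -> smul r a c -> smul r a' c' -> eS c c'.
Proof.
move=> aa'; elim: aa' c c' => [x y [u [ux uy]]|x y z _ IHxy _ IHyz] c c' hc hc'.
  apply: t_step; exists (MSmul (RLeaf r) u).
  by split; [exists r, x | exists r, y].
have [c1 hc1] := smul_nonempty r y.
exact: epsS_trans (IHxy _ _ hc hc1) (IHyz _ _ hc1 hc').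
Qed.

Lemma epsS_madd_assoc x y z p q s t :
  madd x y p -> madd y z q -> madd p z s -> madd x q t -> eS s t.
Proof.
move=> hp hq hs ht; have [_ assoc] : hv_semigroup madd by case: hM => _ [].
have [w [[_ [q0 [/= -> [hq0 hw1]]]] [p0 [_ [hp0 [/= -> hw2]]]]]] := assoc x y z.
have sw := epsS_madd (epsS_madd (epsS_refl x) (epsS_refl y) hp hp0) (epsS_refl z) hs hw2.
have tw := epsS_madd (epsS_refl x) (epsS_madd (epsS_refl y) (epsS_refl z) hq hq0) ht hw1.
exact: epsS_trans sw (epsS_sym tw).
Qed.

(* By associativity modulo eps^*, a solution [e] of [m0 \in m0 + e] is right
   neutral modulo eps^*, a solution [e'] of [m0 \in e' + m0] is left neutral,
   and then [e] ~ [e'], as both lie in the class of any [c \in e' + e]. *)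
Lemma exists_in_core : exists o, in_core o.
Proof.
have [m0] : inhabited M by case: hM.
have [e he] := exists_madd_r m0 m0; have [e' he'] := exists_madd_l m0 m0.
have e_neutral b c : madd b e c -> eS c b.
  by move=> h; have [n hn] := exists_madd_l m0 b; exact: (epsS_madd_assoc hn he h hn).
have e'_neutral b c : madd e' b c -> eS c b.
  move=> h; have [n hn] := exists_madd_r m0 b.
  exact: epsS_sym (epsS_madd_assoc he' hn hn h).
have e'e : eS e' e.
  have [c hc] := madd_nonempty e' e.
  exact: epsS_trans (epsS_sym (e_neutral _ _ hc)) (e'_neutral _ _ hc).
exists e => u y b c eu yb [h|h]; apply: epsS_trans yb (epsS_sym _).
- have [c1 hc1] := madd_nonempty e' b.
  have ue' := epsS_trans (epsS_sym eu) (epsS_sym e'e).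
  exact: epsS_trans (epsS_madd ue' (epsS_refl b) h hc1) (e'_neutral _ _ hc1).
- have [c1 hc1] := madd_nonempty b e.
  exact: epsS_trans (epsS_madd (epsS_refl b) (epsS_sym eu) h hc1) (e_neutral _ _ hc1).
Qed.

Lemma epsS_madd_cancel b z a b' z' a' :
  madd b z a -> madd b' z' a' -> eS a a' -> eS b b' -> eS z z'.
Proof.
move=> h h' aa' bb'; have [o Co] := exists_in_core.
have [n hn] := exists_madd_l b o.
have [t ht] := madd_nonempty n a; have [t' ht'] := madd_nonempty n a'.
have [o' ho'] := madd_nonempty n b'.
have [s hs] := madd_nonempty o z; have [s' hs'] := madd_nonempty o' z'.
have Co' := in_core_epsS Co (epsS_madd (epsS_refl n) bb' hn ho').
have zt := epsS_trans (in_core_madd_l Co hs) (epsS_madd_assoc hn h hs ht).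
have z't' := epsS_trans (in_core_madd_l Co' hs') (epsS_madd_assoc ho' h' hs' ht').
exact: epsS_trans zt (epsS_trans (epsS_madd (epsS_refl n) aa' ht ht') (epsS_sym z't')).
Qed.

Lemma epsS_in_core u v : in_core u -> in_core v -> eS u v.
Proof.
move=> Cu Cv; have [c hc] := madd_nonempty u v.
exact: epsS_trans (in_core_madd_r Cv hc) (epsS_sym (in_core_madd_l Cu hc)).
Qed.

Lemma in_core_madd_fixed a y : madd a y a -> in_core y.
Proof.
move=> h; have [o Co] := exists_in_core; have [c hc] := madd_nonempty a o.
apply: (in_core_epsS Co); apply: epsS_sym.
exact: epsS_madd_cancel h hc (in_core_madd_r Co hc) (epsS_refl a).
Qed.

Lemma in_core_qadd x y d :
  qadd_rel radd rmul madd smul y d x -> in_core x -> in_core y -> in_core d.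
Proof.
move=> [y' [d' [c [yy' dd' hc xc]]]] Cx Cy.
have Cy' := in_core_epsS Cy yy'; have [c' hc'] := madd_nonempty y' y'.
have cc' : eS c c'.
  apply: epsS_trans (epsS_sym xc) _.
  exact: epsS_trans (epsS_in_core Cx Cy') (in_core_madd_l Cy' hc').
have d'y' := epsS_madd_cancel hc hc' cc' (epsS_refl y').
exact: in_core_epsS (in_core_epsS Cy' (epsS_sym d'y')) (epsS_sym dd').
Qed.

(* Distributivity puts some [w] in both [r . (u + u)] and [r . u + r . u];
   cancelling [p] between [w \in p + q] and [p + u] gives [q] ~ [u]. *)
Lemma in_core_smul r u d : in_core u -> smul r u d -> in_core d.
Proof.
move=> Cu hd; have [_ _ _ _ [distr _ _]] := hM.
have [w [[_ [s [/= -> [hs hw]]]] [p [q [hp [hq hpq]]]]]] := distr r u u.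
have wd := epsS_smul (epsS_sym (in_core_madd_l Cu hs)) hw hd.
have pd := epsS_smul (epsS_refl u) hp hd; have qd := epsS_smul (epsS_refl u) hq hd.
have [c hc] := madd_nonempty p u.
have wc := epsS_trans wd (epsS_trans (epsS_sym pd) (in_core_madd_r Cu hc)).
have qu := epsS_madd_cancel hpq hc wc (epsS_refl p).
exact: in_core_epsS (in_core_epsS Cu (epsS_sym qu)) qd.
Qed.

Lemma qsup_qadd (K : realType) (top : K) (f : M -> K) x y d :
  (forall a, f a <= top) ->
  (forall a b, exists2 z, madd b z a & Num.min (f a) (f b) <= f z) ->
  qadd_rel radd rmul madd smul y d x ->
  Num.min (qsup in_core eS top f x) (qsup in_core eS top f y) <= qsup in_core eS top f d.
Proof.
move=> f_le_top sub qyd; apply: min_qsup_le_dominated => //.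
- exact: epsS_refl.
- exact: epsS_in_core.
- exact: in_core_qadd.
- move=> a; have [o ho fo] := sub a a.
  by exists o; [exact: in_core_madd_fixed ho | rewrite -(minxx (f a))].
- move: qyd => [y' [d' [c [yy' dd' hc xc]]]] a b xa yb.
  have [z hz fz] := sub a b; exists z => //.
  apply: epsS_trans dd' (epsS_sym _).
  exact: epsS_madd_cancel hz hc (epsS_trans (epsS_sym xa) xc) (epsS_trans (epsS_sym yb) yy').
Qed.

Lemma qsup_smul (K : realType) (top : K) (f : M -> K) r x x' d :
  (forall a, f a <= top) -> (forall a z, smul r a z -> f a <= f z) ->
  eS x x' -> smul r x' d -> qsup in_core eS top f x <= qsup in_core eS top f d.
Proof.
move=> f_le_top sub xx' hd; apply: qsup_le_dominated => // [|Cx|a xa].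
- exact: epsS_refl.
- exact: in_core_smul (in_core_epsS Cx xx') hd.
- have [z hz] := smul_nonempty r a; exists z; last exact: sub hz.
  exact: epsS_sym (epsS_smul (epsS_trans (epsS_sym xa) xx') hz hd).
Qed.

End FundamentalRelation.

Section QuotientFuzzySet.
Variables (K : realType) (R M : Type) (radd rmul : R -> R -> set R)
  (madd : M -> M -> set M) (smul : R -> M -> set M) (MA NA : M -> K * K).

Local Notation eS := (epsS radd rmul madd smul).
Local Notation in_core := (in_core radd rmul madd smul).
Local Notation Meps := (Meps radd rmul madd smul MA).
Local Notation Neps := (Neps radd rmul madd smul NA).

Lemma MepsE x :
  Meps x = (qsup in_core eS 1 (fun a => (MA a).1) x, qsup in_core eS 1 (fun a => (MA a).2) x).
Proof. by rewrite /Meps /qsup; case: pselect. Qed.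

Lemma NepsE x :
  Neps x = (- qsup in_core eS 0 (fun a => - (NA a).1) x,
            - qsup in_core eS 0 (fun a => - (NA a).2) x).
Proof. by rewrite /Neps /qsup; case: pselect => Cx; rewrite ?oppr0 // /iinf !inf_image. Qed.

Hypothesis hA : ivifs MA NA.

Lemma ivifs_bounds :
  [/\ forall a, (MA a).1 <= 1, forall a, (MA a).2 <= 1,
      forall a, - (NA a).1 <= 0 & forall a, - (NA a).2 <= 0].
Proof.
split=> a; have [/inD01_in01[[_ ?] [_ ?]] /inD01_in01[[? _] [? _]] _] := hA a;
  by rewrite ?oppr_le0.
Qed.

Lemma quotient_ivifs : ivifs Meps Neps.
Proof.
move=> x; have [M1 M2 N1 N2] := ivifs_bounds.
have refl := epsS_refl radd rmul madd smul.
have [[MA0 _ _] [_ _ NA1] _] := hA x.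
rewrite MepsE NepsE; split; [split|split|] => /=.
- exact: le_trans MA0 (le_qsup _ M1 (refl x)).
- by apply: qsup_le_fun => // a; have [[]] := hA a.
- exact: qsup_le_top.
- by rewrite oppr_ge0; exact: qsup_le_top.
- by rewrite lerN2; apply: qsup_le_fun => // a; rewrite lerN2; have [_ []] := hA a.
- by rewrite lerNl; apply: le_trans (le_qsup _ N2 (refl x)); rewrite lerN2.
- rewrite lerBlDr; apply: qsup_le_shift => // [|a]; first by rewrite addr0.
  by rewrite lerBrDr; have [] := hA a.
Qed.

Hypothesis hM : hv_module radd rmul madd smul.

Lemma quotient_madd (dT dS : K -> K -> K) x y d :
  idem_tnorm dT -> idem_snorm dS ->
  (forall x a, exists y, [/\ madd a y x, ile (inorm dT (MA x) (MA a)) (MA y) &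
                                ile (NA y) (inorm dS (NA x) (NA a))]) ->
  qadd_rel radd rmul madd smul y d x ->
  ile (inorm dT (Meps x) (Meps y)) (Meps d) /\ ile (Neps d) (inorm dS (Neps x) (Neps y)).
Proof.
move=> hT hS sub qyd; have [M1 M2 N1 N2] := ivifs_bounds.
have [Mx Nx _] := quotient_ivifs x; have [My Ny _] := quotient_ivifs y.
rewrite (inorm_idem_tnorm hT Mx My) (inorm_idem_snorm hS Nx Ny) !MepsE !NepsE.
rewrite /ile /inorm /= -!oppr_min !lerN2.
have {}sub a b : exists z, [/\ madd b z a, ile (inorm Num.min (MA a) (MA b)) (MA z) &
                                ile (NA z) (inorm Num.max (NA a) (NA b))].
  have [z [hz hMz hNz]] := sub a b; have [Ma Na _] := hA a; have [Mb Nb _] := hA b.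
  by exists z; rewrite -(inorm_idem_tnorm hT Ma Mb) -(inorm_idem_snorm hS Na Nb).
by split; split; apply: (qsup_qadd hM) qyd => // a b;
  have [z [hz [? ?] [? ?]]] := sub a b; exists z; rewrite // -oppr_max lerN2.
Qed.

Lemma quotient_smul r x x' d :
  (forall x r, ile (MA x) (iinf MA (smul r x)) /\ ile (isup NA (smul r x)) (NA x)) ->
  eS x x' -> smul r x' d -> ile (Meps x) (Meps d) /\ ile (Neps d) (Neps x).
Proof.
move=> sub xx' hd; have [M1 M2 N1 N2] := ivifs_bounds.
have subM a z : smul r a z -> ile (MA a) (MA z).
  by apply: ile_iinf (sub a r).1 => j; have [] := hA j.
have subN a z : smul r a z -> ile (NA z) (NA a).
  by apply: isup_ile (sub a r).2 => j; have [] := hA j.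
rewrite !MepsE !NepsE /ile /= !lerN2.
by split; split; apply: (qsup_smul hM) xx' hd => // a z /[dup] /subM[? ?] /subN[? ?];
  rewrite // lerN2.
Qed.

End QuotientFuzzySet.

Theorem theorem3p9 (K : realType) (R M : Type)
  (radd rmul : R -> R -> set R) (madd : M -> M -> set M) (smul : R -> M -> set M)
  (dT dS : K -> K -> K) (MA NA : M -> K * K) :
  hv_ring radd rmul ->
  hv_module radd rmul madd smul ->
  idem_tnorm dT -> idem_snorm dS ->
  ivifs MA NA ->
  ivif_ST_hv_submodule madd smul (inorm dT) (inorm dS) MA NA ->
  quotient_ivif_ST_submodule radd rmul madd smul (inorm dT) (inorm dS) MA NA.
Proof.
move=> _ hM hT hS hA [_ sub _ smul_sub]; split.
- exact: quotient_ivifs.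
- by move=> o Co; rewrite /Meps /Neps; case: pselect.
- by move=> x y d; apply: quotient_madd.
- by move=> r r' x x' d _; apply: quotient_smul.
Qed.
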